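(* Assume (H1), (H2.1), (H2.4) and (H3.1). Then there exists a positive integer $N_{0}$ such that, for any $N\ge N_{0}$, the operator $I_{X^{+}}-\mathcal{L}_{N}^{+}\mathcal{F}_{s}V^{+}\colon X^{+}\to X^{+}$ is invertible and $$\|(I_{X^{+}}-\mathcal{L}_{N}^{+}\mathcal{F}_{s}V^{+})^{-1}\|_{X^{+}\leftarrow X^{+}}\le 2\|(I_{X^{+}}-\mathcal{F}_{s}V^{+})^{-1}\|_{X^{+}\leftarrow X^{+}}.$$ Moreover, for each $\phi\in\widehat{X}$, the equation $z=\mathcal{L}_{N}^{+}\mathcal{F}_{s}V(\phi,z)$ has a unique solution $w^{\ast}\in X^{+}$ and $$\|w^{\ast}-z^{\ast}\|_{X^{+}}\le 2\|(I_{X^{+}}-\mathcal{F}_{s}V^{+})^{-1}\|_{X^{+}\leftarrow X^{+}}\,\|\mathcal{L}_{N}^{+}z^{\ast}-z^{\ast}\|_{X^{+}},$$ where $z^{\ast}\in X^{+}$ is the unique solution of $z=\mathcal{F}_{s}V(\phi,z)$.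
   Context: Let $d\ge 1$ be an integer and $\tau>0$, $h>0$ real. $X$, $X^{+}$, $X^{\pm}$ are real normed spaces of functions $[-\tau,0]\to\mathbb{R}^{d}$, $[0,h]\to\mathbb{R}^{d}$, $[-\tau,h]\to\mathbb{R}^{d}$, respectively. $V\colon X\times X^{+}\to X^{\pm}$ and $\mathcal{F}_{s}\colon X^{\pm}\to X^{+}$ are linear operators with $V(\phi,z)|_{[-\tau,0]}=\phi$; $V^{-}\phi:=V(\phi,0_{X^{+}})$, $V^{+}z:=V(0_{X},z)$, so $V(\phi,z)=V^{-}\phi+V^{+}z$. Let $\widetilde{X}^{+}$ be a linear subspace of $X^{+}$. For $N\in\mathbb{N}$, $X_{N}^{+}$ is a finite-dimensional space, $R_{N}^{+}\colon\widetilde{X}^{+}\to X_{N}^{+}$ and $P_{N}^{+}\colon X_{N}^{+}\to X^{+}$ are linear with $R_{N}^{+}P_{N}^{+}=I_{X_{N}^{+}}$, and $\mathcal{L}_{N}^{+}:=P_{N}^{+}R_{N}^{+}$. Hypotheses: (H1) $I_{X^{+}}-\mathcal{F}_{s}V^{+}\colon X^{+}\to X^{+}$ is invertible with bounded inverse, and for each $\phi\in X$ the equation $z=\mathcal{F}_{s}V(\phi,z)$ has a unique solution in $X^{+}$. There is a linear subspace $\widehat{X}^{+}\subseteq\widetilde{X}^{+}$ with a norm $\|\cdot\|_{\widehat{X}^{+}}$ making it complete such that: (H2.1) $\|(\mathcal{L}_{N}^{+}-I_{X^{+}})|_{\widehat{X}^{+}}\|_{X^{+}\leftarrow\widehat{X}^{+}}\to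 0$ as $N\to+\infty$; (H2.4) the range of $\mathcal{F}_{s}V^{+}\colon X^{+}\to X^{+}$ is contained in $\widehat{X}^{+}$ and $\mathcal{F}_{s}V^{+}\colon X^{+}\to\widehat{X}^{+}$ is bounded. There is a linear subspace $\widehat{X}\subseteq X$ with a norm making it complete such that: (H3.1) the range of $\mathcal{F}_{s}V^{-}|_{\widehat{X}}$ is contained in $\widehat{X}^{+}$ and $\mathcal{F}_{s}V^{-}|_{\widehat{X}}\colon\widehat{X}\to\widehat{X}^{+}$ is bounded. *)

From HB Require Import structures.
From mathcomp Require Import all_boot all_order all_algebra.
From mathcomp Require Import all_classical all_reals all_analysis.
Set Implicit Arguments. Unset Strict Implicit. Unset Printing Implicit Defensive.
Import Order.TTheory GRing.Theory Num.Theory.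
Import numFieldNormedType.Exports.
Local Open Scope classical_set_scope.
Local Open Scope ring_scope.

(* Operator norm  sup_{|x| <= 1} |f x|, valued in the extended reals
   (it is +oo exactly when f is unbounded on the unit ball). *)
Definition opnorm (R : realType) (U W : normedModType R) (f : U -> W) : \bar R :=
  ereal_sup [set (`|f x|)%:E | x in [set x : U | `|x| <= 1]].

Definition is_subspace (R : realType) (U : lmodType R) (S : set U) : Prop :=
  S 0 /\ forall (a : R) (x y : U), S x -> S y -> S (a *: x + y).

Definition linear_on (R : realType) (U W : lmodType R) (S : set U) (f : U -> W) : Prop :=
  forall (a : R) (x y : U), S x -> S y -> f (a *: x + y) = a *: f x + f y.

From HB Require Import structures.
From mathcomp Require Import all_boot all_order all_algebra.
From mathcomp Require Import all_classical all_reals all_analysis.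
From mathcomp Require Import ring lra.
Import Order.TTheory GRing.Theory Num.Theory.
Import numFieldNormedType.Exports.
Local Open Scope classical_set_scope.
Local Open Scope ring_scope.

(* Write A := Fs V^+ and L := L_N^+.  Then
     I - L A = (I - A) (I - (I - A)^-1 (L - I) A),
   and A factors as iota G through the complete space Xh.  The perturbation
   P G, with P := (I - A)^-1 (L - I) iota, has norm at most
   |(I - A)^-1| |(L - I) iota| |G| <= 1/2 for N large by (H2.1), and
   I - P G is inverted through I - G P on Xh by the contraction principle
   (X^+ itself need not be complete), with an inverse of norm at most 2.
   The error bound holds because the two solutions w, z satisfy
   (I - L A) (w - z) = L z - z. *)

Section OperatorNorm.
Context {R : realType} {U W : normedModType R}.
Implicit Types (f : U -> W) (c : R).

Lemma opnorm_ge0 f : (0 <= opnorm f)%E.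
Proof.
apply: le_trans (ereal_sup_ubound _); last by exists 0; rewrite /= ?normr0.
by rewrite lee_fin.
Qed.

Lemma opnorm_le f c :
  0 <= c -> (forall x, `|f x| <= c * `|x|) -> (opnorm f <= c%:E)%E.
Proof.
move=> c0 fc; apply/ereal_supP => _ [x /= x1 <-]; rewrite lee_fin.
by apply: le_trans (fc x) _; rewrite -[leRHS]mulr1 ler_wpM2l.
Qed.

Lemma opnorm_le_ge0 {f c} : (opnorm f <= c%:E)%E -> 0 <= c.
Proof. by move=> fc; rewrite -lee_fin (le_trans (opnorm_ge0 _) fc). Qed.

Lemma opnorm_fineK f : (opnorm f < +oo)%E -> (fine (opnorm f))%:E = opnorm f.
Proof. by move=> f_fin; rewrite fineK // ge0_fin_numE ?opnorm_ge0. Qed.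

Lemma normr_le_opnorm {f c} :
  scalable f -> (opnorm f <= c%:E)%E -> forall x, `|f x| <= c * `|x|.
Proof.
move=> fZ fc x; have [->|x0] := eqVneq x 0.
  by rewrite -(scale0r 0) fZ !scale0r !normr0 mulr0.
have nx : 0 < `|x| by rewrite normr_gt0.
pose u := `|x|^-1 *: x.
have u1 : `|u| = 1 by rewrite normrZ normfV normr_id mulVf ?gt_eqF.
have : ((`|f u|)%:E <= c%:E)%E.
  by apply: le_trans fc; apply: ereal_sup_ubound; exists u; rewrite /= ?u1.
by rewrite lee_fin fZ normrZ normfV normr_id ler_pdivrMl // mulrC.
Qed.

End OperatorNorm.

Lemma cvge_lt {R : realType} {T : Type} {F : set_system T} {FF : Filter F}
    {f : T -> \bar R} {l y : R} :
  f @ F --> l%:E -> l < y -> \forall t \near F, (f t < y%:E)%E.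
Proof.
move=> /fine_cvgP[f_fin /cvgr_lt f_lt] ly; near=> t.
rewrite -(@fineK _ (f t)); last by near: t.
by rewrite lte_fin; near: t; exact: f_lt.
Unshelve. all: end_near.
Qed.

Lemma exists_gt0_mulr_le_half {R : realFieldType} (b g : R) :
  0 <= b * g -> exists2 e : R, 0 < e & b * e * g <= 2^-1.
Proof.
move=> bg0; have bg1 : 0 < b * g + 1 by rewrite ltr_wpDl.
exists (2^-1 / (b * g + 1)); first by rewrite divr_gt0.
have -> : b * (2^-1 / (b * g + 1)) * g = 2^-1 * (b * g) / (b * g + 1).
  by field; rewrite gt_eqF.
by rewrite ler_pdivrMr //; lra.
Qed.

Section IdentityMinusSmall.
Context {R : realType}.

Lemma ler_normr_id_sub {V : normedModType R} {M : V -> V} {m : R} {x : V} :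
  `|M x| <= m * `|x| -> (1 - m) * `|x| <= `|x - M x|.
Proof.
move=> Mx; have : `|x| <= `|x - M x| + `|M x|.
  by rewrite -{1}(subrK (M x) x) ler_normD.
lra.
Qed.

Lemma id_sub_contraction_inverse {Y : completeNormedModType R}
    (K : {linear Y -> Y}) {k : R} :
  0 <= k -> k < 1 -> (forall h, `|K h| <= k * `|h|) ->
  exists T : Y -> Y, cancel (idfun \- K) T /\ cancel T (idfun \- K).
Proof.
move=> k0 k1 Kk.
have fixed y : exists h, h = y + K h.
  have T_contr : is_contraction (totalfun (fun h => y + K h)).
    exists (NngNum k0); split=> //=.
    by move=> [h h'] _ /=; rewrite opprD addrACA subrr add0r -linearB Kk.
  by have [h _ hE] := banach_fixed_point T_contr closedT (ex_intro _ 0 I); exists h.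
have [T TE] := choice fixed.
have TK y : T y - K (T y) = y by rewrite {1}TE addrK.
exists T; split=> [z|]; last exact: TK.
set d := T (z - K z) - z.
have dK : d - K d = 0.
  by rewrite linearB opprD opprK addrACA TK [- z + _]addrC addrA subrK subrr.
apply/eqP; rewrite -subr_eq0 -normr_le0 -/d.
have := ler_normr_id_sub (Kk d); rewrite dK normr0 pmulr_rle0 //.
by rewrite subr_gt0.
Qed.

Lemma id_sub_comp_inverse {U : normedModType R} {Y : completeNormedModType R}
    (P : {linear Y -> U}) (Q : {linear U -> Y}) {p q : R} :
  0 <= p -> 0 <= q -> p * q <= 2^-1 ->
  (forall h, `|P h| <= p * `|h|) -> (forall z, `|Q z| <= q * `|z|) ->
  exists S : U -> U, [/\ cancel (idfun \- (P \o Q)) S,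
    cancel S (idfun \- (P \o Q)) & forall y, `|S y| <= 2 * `|y|].
Proof.
move=> p0 q0 pq Pp Qq.
have PQ x : `|P (Q x)| <= p * q * `|x|.
  by rewrite -mulrA; apply: le_trans (Pp _) _; rewrite ler_wpM2l ?Qq.
have QP h : `|(Q \o P) h| <= q * p * `|h|.
  by rewrite -mulrA; apply: le_trans (Qq _) _; rewrite ler_wpM2l ?Pp.
have qp : q * p < 1 by rewrite mulrC; lra.
have [T [TK KT]] := id_sub_contraction_inverse (Q \o P) (mulr_ge0 q0 p0) qp QP.
have {}KT h : T h - Q (P (T h)) = h := KT h.
pose S y := y + P (T (Q y)).
have SK y : S y - P (Q (S y)) = y.
  by rewrite /S linearD linearD opprD addrACA -linearB KT subrK.
have S_le y : `|S y| <= 2 * `|y|.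
  have := ler_normr_id_sub (M := P \o Q) (PQ (S y)); rewrite /= SK.
  have : p * q * `|S y| <= 2^-1 * `|S y| by rewrite ler_wpM2r.
  lra.
exists S; split=> [z|y|]; [|exact: SK|exact: S_le].
by rewrite /S /= linearB /= TK subrK.
Qed.

End IdentityMinusSmall.

Section Subspaces.
Context {R : realType} {U W : lmodType R} {S : set U}.

Lemma is_subspaceD {x y} : is_subspace S -> S x -> S y -> S (x + y).
Proof. by move=> [_ SZ] Sx Sy; rewrite -[x]scale1r; exact: SZ. Qed.

Lemma linear_onD {f : U -> W} {x y} :
  linear_on S f -> S x -> S y -> f (x + y) = f x + f y.
Proof. by move=> fL Sx Sy; rewrite -[x]scale1r fL // !scale1r. Qed.

Lemma linear_onB {f : U -> W} {x y} :
  linear_on S f -> S x -> S y -> f (x - y) = f x - f y.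
Proof. by move=> fL Sx Sy; rewrite addrC -scaleN1r fL // scaleN1r addrC. Qed.

End Subspaces.

Section Pair0.
Context {R : pzRingType} {U W : lmodType R}.

Definition pair0 (w : W) : U * W := (0, w).

Lemma pair0_linear : linear pair0.
Proof. by move=> a w w'; rewrite /pair0; congr (_, _); rewrite /= scaler0 addr0. Qed.

HB.instance Definition _ := GRing.isLinear.Build _ _ _ _ pair0 pair0_linear.

Lemma linear_pair0E {Z : lmodType R} (f : {linear (U * W)%type -> Z}) u w :
  f (u, w) = f (u, 0) + f (pair0 w).
Proof. by rewrite -linearD; congr (f _); congr (_, _); rewrite /= ?addr0 ?add0r. Qed.

End Pair0.

Section ProjectedEquation.
Context {R : realType} {U : normedModType R} {Y : completeNormedModType R}.
Context {A : {linear U -> U}} {B : U -> U} {b : R}.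
Hypotheses (B_K : forall z, B (z - A z) = z) (K_B : forall y, B y - A (B y) = y).
Hypothesis B_le : (opnorm B <= b%:E)%E.
Context {iota : {linear Y -> U}} {G : {linear U -> Y}} {g : R}.
Hypotheses (iotaG : forall z, iota (G z) = A z) (G_le : (opnorm G <= g%:E)%E).
Context {S : set U} {L : U -> U} {e : R}.
Hypotheses (S_subspace : is_subspace S) (L_lin : linear_on S L).
Hypothesis S_iota : forall h, S (iota h).
Hypothesis defect_le : (opnorm (fun h => (L (iota h) - iota h)%R) <= e%:E)%E.
Hypothesis beg_le : b * e * g <= 2^-1.

HB.instance Definition _ :=
  GRing.isLinear.Build _ _ _ _ B (@can2_linear _ _ _ (idfun \- A) B B_K K_B).

Definition projection_defect h := L (iota h) - iota h.

Lemma projection_defect_linear : linear projection_defect.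
Proof.
move=> a h h'; rewrite /projection_defect linearP L_lin ?S_iota //.
by rewrite scalerBr opprD addrACA.
Qed.

HB.instance Definition _ :=
  GRing.isLinear.Build _ _ _ _ projection_defect projection_defect_linear.

Lemma projected_inverse : exists Ainv : U -> U,
  [/\ forall z, Ainv (z - L (A z)) = z, forall y, Ainv y - L (A (Ainv y)) = y
    & forall y, `|Ainv y| <= 2 * b * `|y|].
Proof.
have b0 := opnorm_le_ge0 B_le; have e0 := opnorm_le_ge0 defect_le.
have g0 := opnorm_le_ge0 G_le.
pose P := B \o projection_defect.
have Pp h : `|P h| <= b * e * `|h|.
  rewrite -mulrA; apply: le_trans (normr_le_opnorm (linearZZ B) B_le _) _.
  by rewrite ler_wpM2l // (normr_le_opnorm (linearZZ projection_defect) defect_le).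
have [T [TK KT Tle]] := id_sub_comp_inverse P G (mulr_ge0 b0 e0) g0 beg_le Pp
  (normr_le_opnorm (linearZZ G) G_le).
have factor z : z - L (A z) = (idfun \- A) ((idfun \- (P \o G)) z).
  rewrite linearB /= K_B /projection_defect iotaG.
  by rewrite opprB addrA subrK.
exists (T \o B); split=> [z|y|y] /=.
- by rewrite factor B_K TK.
- by rewrite factor KT; exact: K_B.
- rewrite -mulrA; apply: le_trans (Tle _) _.
  by rewrite ler_pM2l // (normr_le_opnorm (linearZZ B) B_le).
Qed.

Section Solutions.
Context {Ainv : U -> U}.
Hypothesis Ainv_K : forall z, Ainv (z - L (A z)) = z.
Hypothesis K_Ainv : forall y, Ainv y - L (A (Ainv y)) = y.
Context {c : U}.
Hypothesis S_c : S c.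

Let S_A z : S (A z). Proof. by rewrite -iotaG. Qed.

Let L_cA w : L (c + A w) = L c + L (A w).
Proof. exact: linear_onD L_lin S_c (S_A w). Qed.

Lemma projected_eq_solution w : w = L (c + A w) <-> w = Ainv (L c).
Proof.
rewrite L_cA; split=> [wE|->].
  by rewrite -(Ainv_K w) /= {1}wE addrK.
by apply/eqP; rewrite -subr_eq; apply/eqP; exact: K_Ainv.
Qed.

Lemma projected_eq_error w zs :
  w = L (c + A w) -> zs = c + A zs -> w - zs = Ainv (L zs - zs).
Proof.
move=> wE zsE; have S_zs : S zs by rewrite zsE; exact: is_subspaceD.
have LzsE : L zs = L c + L (A zs) by rewrite {1}zsE L_cA.
rewrite -[LHS]Ainv_K linearB (linear_onB L_lin) //; congr Ainv.
by rewrite {1}wE L_cA LzsE addrAC opprB addrA (addrAC (L c)) addrK.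
Qed.

End Solutions.

End ProjectedEquation.

Theorem proposition4p3 (R : realType)
  (X Xp Xpm : normedModType R)
  (V : {linear (X * Xp)%type -> Xpm})
  (Fs : {linear Xpm -> Xp})
  (Xt : set Xp) (HXt : is_subspace Xt)
  (XN : nat -> vectType R)
  (RN : forall N : nat, Xp -> XN N)
  (PN : forall N : nat, {linear XN N -> Xp})
  (HRN : forall N, linear_on Xt (RN N))
  (HPN : forall N (y : XN N), Xt (PN N y))
  (HRP : forall N (y : XN N), RN N (PN N y) = y)
  (* (H1) *)
  (Binv : Xp -> Xp)
  (HB1 : forall z : Xp, Binv (z - Fs (V (0, z))) = z)
  (HB2 : forall z : Xp, Binv z - Fs (V (0, Binv z)) = z)
  (HBb : (opnorm Binv < +oo)%E)
  (H1u : forall phi : X, exists! z : Xp, z = Fs (V (phi, z)))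
  (* the space \widehat{X}^+ *)
  (Xh : completeNormedModType R) (iota : {linear Xh -> Xp})
  (Hiota_inj : injective iota) (Hiota_t : forall h : Xh, Xt (iota h))
  (* (H2.1) *)
  (H21 : (fun N : nat => opnorm (fun h : Xh => PN N (RN N (iota h)) - iota h))
           @ \oo --> 0%E)
  (* (H2.4) *)
  (H24 : exists G : {linear Xp -> Xh},
           (opnorm G < +oo)%E /\ forall z : Xp, iota (G z) = Fs (V (0, z)))
  (* the space \widehat{X} *)
  (Xh0 : completeNormedModType R) (iX : {linear Xh0 -> X})
  (HiX_inj : injective iX)
  (* (H3.1) *)
  (H31 : exists G3 : {linear Xh0 -> Xh},
           (opnorm G3 < +oo)%E /\ forall psi : Xh0, iota (G3 psi) = Fs (V (iX psi, 0))) :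
  exists N0 : nat, (0 < N0)%N /\ forall N : nat, (N0 <= N)%N ->
    (exists Ainv : Xp -> Xp,
        (forall z : Xp, Ainv (z - PN N (RN N (Fs (V (0, z))))) = z) /\
        (forall z : Xp, Ainv z - PN N (RN N (Fs (V (0, Ainv z)))) = z) /\
        (opnorm Ainv <= 2%:E * opnorm Binv)%E) /\
    forall psi : Xh0,
      (exists! w : Xp, w = PN N (RN N (Fs (V (iX psi, w))))) /\
      forall w zs : Xp,
        w = PN N (RN N (Fs (V (iX psi, w)))) ->
        zs = Fs (V (iX psi, zs)) ->
        ((`|w - zs|)%:E <= 2%:E * opnorm Binv * (`|PN N (RN N zs) - zs|)%:E)%E.
Proof.
have [G [G_fin iotaG]] := H24; have [G3 [_ iotaG3]] := H31.
pose A : {linear Xp -> Xp} := Fs \o V \o pair0.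
set b := fine (opnorm Binv); set g := fine (opnorm G).
have bE : opnorm Binv = b%:E by rewrite opnorm_fineK.
have B_le : (opnorm Binv <= b%:E)%E by rewrite bE.
have G_le : (opnorm G <= g%:E)%E by rewrite opnorm_fineK.
have [eps eps0 beps] : exists2 eps, 0 < eps & b * eps * g <= 2^-1.
  by apply: exists_gt0_mulr_le_half; rewrite mulr_ge0 ?(opnorm_le_ge0 B_le, opnorm_le_ge0 G_le).
have [N1 _ defect_small] := cvge_lt H21 eps0.
exists N1.+1; split=> // N /ltnW/defect_small/ltW defect_le.
have L_lin : linear_on Xt (fun z => PN N (RN N z)).
  by move=> a x y Sx Sy; rewrite HRN // linearP.
have [Ainv [Ainv_K K_Ainv Ainv_le]] := projected_inverse (A := A) HB1 HB2
  B_le iotaG G_le L_lin Hiota_t defect_le beps.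
split.
  exists Ainv; split; [exact: Ainv_K | split; first exact: K_Ainv].
  rewrite bE -EFinM; apply: opnorm_le => //.
  by rewrite mulr_ge0 ?(opnorm_le_ge0 B_le).
move=> psi; pose c := Fs (V (iX psi, 0)).
have S_c : Xt c by rewrite /c -iotaG3.
have VE w : Fs (V (iX psi, w)) = c + A w := linear_pair0E (Fs \o V) _ _.
split=> [|w zs].
  exists (Ainv (PN N (RN N c))); split=> [|w]; rewrite VE;
  by rewrite (projected_eq_solution (A := A) iotaG L_lin Hiota_t Ainv_K K_Ainv S_c).
rewrite !VE => wE zsE.
rewrite (projected_eq_error (A := A) iotaG HXt L_lin Hiota_t Ainv_K S_c _ _ wE zsE).
by rewrite bE -!EFinM lee_fin.
Qed.
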